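(* Let $(X,d,\kappa)$ be a digital metric space with $X$ finite, and let $T:X\to X$ be a weakly uniformly strict digital contraction. Then $T$ is a digital contraction map, i.e., there exists $\alpha\in(0,1)$ such that $d(T(x),T(y))\le\alpha\,d(x,y)$ for all $x,y\in X$.
   Context: A digital metric space is a triple $(X,d,\kappa)$ where $X\subset\mathbb{Z}^n$ for some positive integer $n$, $\kappa$ is an adjacency relation on $X$, and $d$ is a metric on $X$. $T:X\to X$ is a weakly uniformly strict digital contraction if for every $\varepsilon>0$ there exists $\delta>0$ such that for all $x,y\in X$, $\varepsilon\le d(x,y)<\varepsilon+\delta$ implies $d(T(x),T(y))<\varepsilon$. *)

From Stdlib Require Import Reals ZArith List.
Open Scope R_scope.

Definition in_Zn (n : nat) (p : list Z) : Prop := length p = n.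

Definition is_metric_on (X : list Z -> Prop) (d : list Z -> list Z -> R) : Prop :=
  (forall x y, X x -> X y -> 0 <= d x y) /\
  (forall x y, X x -> X y -> (d x y = 0 <-> x = y)) /\
  (forall x y, X x -> X y -> d x y = d y x) /\
  (forall x y z, X x -> X y -> X z -> d x z <= d x y + d y z).

Definition digital_metric_space (n : nat) (X : list Z -> Prop)
  (d : list Z -> list Z -> R) (kappa : list Z -> list Z -> Prop) : Prop :=
  (0 < n)%nat /\
  (forall x, X x -> in_Zn n x) /\
  (forall x y, X x -> X y -> kappa x y -> kappa y x) /\
  (forall x, X x -> ~ kappa x x) /\
  is_metric_on X d.

Definition maps_into (X : list Z -> Prop) (T : list Z -> list Z) : Prop :=
  forall x, X x -> X (T x).

Definition finite_set (X : list Z -> Prop) : Prop :=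
  exists l : list (list Z), forall x, X x <-> In x l.

Definition weakly_uniformly_strict_digital_contraction
  (X : list Z -> Prop) (d : list Z -> list Z -> R) (T : list Z -> list Z) : Prop :=
  forall eps, 0 < eps -> exists delta, 0 < delta /\
    forall x y, X x -> X y -> eps <= d x y -> d x y < eps + delta ->
      d (T x) (T y) < eps.

Definition digital_contraction_map
  (X : list Z -> Prop) (d : list Z -> list Z -> R) (T : list Z -> list Z) : Prop :=
  exists alpha, 0 < alpha < 1 /\
    forall x y, X x -> X y -> d (T x) (T y) <= alpha * d x y.

(* Taking eps := d(x, y) in the definition gives d(T x, T y) < d(x, y) whenever x <> y,
   so every pair has its own contraction factor below 1; on a finite space the largest of
   these finitely many factors works for all pairs. *)

From Stdlib Require Import Reals ZArith List Lra Psatz.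
Open Scope R_scope.

Lemma exists_contraction_factor (a b : R) :
  0 <= a -> a < b \/ a = 0 /\ b = 0 ->
  exists alpha, 0 < alpha < 1 /\ a <= alpha * b.
Proof.
  intros Ha [Hab | [-> ->]].
  - assert (Hb : 0 < b) by lra.
    set (r := a / b).
    assert (Hr : a = r * b) by (unfold r; field; lra).
    assert (Hr01 : 0 <= r < 1) by (rewrite Hr in Ha, Hab; split; nra).
    exists ((r + 1) / 2); split; [lra|].
    rewrite Hr; apply Rmult_le_compat_r; lra.
  - exists (1 / 2); split; lra.
Qed.

Lemma exists_uniform_contraction_factor {A : Type} (f g : A -> R) (L : list A) :
  (forall p, In p L -> 0 <= f p /\ (f p < g p \/ f p = 0 /\ g p = 0)) ->
  exists alpha, 0 < alpha < 1 /\ forall p, In p L -> f p <= alpha * g p.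
Proof.
  induction L as [|p L IH]; intros Hshrink.
  - exists (1 / 2); split; [lra | intros q []].
  - destruct (Hshrink p (or_introl eq_refl)) as [Hp0 Hp].
    destruct (exists_contraction_factor _ _ Hp0 Hp) as [a [Ha Hfa]].
    destruct IH as [b [Hb Hfb]].
    { intros q Hq; apply Hshrink; right; exact Hq. }
    assert (Hmax : Rmax a b < 1) by (apply Rmax_lub_lt; lra).
    assert (Hmax_a := Rmax_l a b).
    assert (Hmax_b := Rmax_r a b).
    exists (Rmax a b); split; [lra|].
    intros q [<- | Hq].
    + apply Rle_trans with (1 := Hfa).
      apply Rmult_le_compat_r; [lra | exact Hmax_a].
    + assert (Hg : 0 <= g q) by (destruct (Hshrink q (or_intror Hq)); lra).
      apply Rle_trans with (1 := Hfb _ Hq).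
      apply Rmult_le_compat_r; [exact Hg | exact Hmax_b].
Qed.

Lemma wusdc_dist_lt (X : list Z -> Prop) (d : list Z -> list Z -> R)
  (T : list Z -> list Z) (x y : list Z) :
  weakly_uniformly_strict_digital_contraction X d T ->
  X x -> X y -> 0 < d x y -> d (T x) (T y) < d x y.
Proof.
  intros HT Hx Hy Hpos.
  destruct (HT (d x y) Hpos) as [delta [Hdelta Hclose]].
  apply Hclose; auto; lra.
Qed.

Lemma wusdc_shrinks_dist (X : list Z -> Prop) (d : list Z -> list Z -> R)
  (T : list Z -> list Z) (x y : list Z) :
  is_metric_on X d -> maps_into X T ->
  weakly_uniformly_strict_digital_contraction X d T ->
  X x -> X y ->
  0 <= d (T x) (T y) /\ (d (T x) (T y) < d x y \/ d (T x) (T y) = 0 /\ d x y = 0).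
Proof.
  intros [Hnonneg [Hzero _]] HTX HT Hx Hy.
  split; [apply Hnonneg; apply HTX; assumption|].
  destruct (list_eq_dec Z.eq_dec x y) as [<- | Hne].
  - right; split; apply Hzero; auto.
  - left; apply (wusdc_dist_lt X); auto.
    destruct (Hnonneg x y Hx Hy) as [Hlt | Heq]; [exact Hlt|].
    exfalso; apply Hne, Hzero; auto.
Qed.

Theorem corollary8p3 (n : nat) (X : list Z -> Prop)
  (d : list Z -> list Z -> R) (kappa : list Z -> list Z -> Prop)
  (T : list Z -> list Z) :
  digital_metric_space n X d kappa ->
  finite_set X ->
  maps_into X T ->
  weakly_uniformly_strict_digital_contraction X d T ->
  digital_contraction_map X d T.
Proof.
  intros [_ [_ [_ [_ Hmetric]]]] [l Hl] HTX HT.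
  destruct (exists_uniform_contraction_factor
              (fun p => d (T (fst p)) (T (snd p))) (fun p => d (fst p) (snd p))
              (list_prod l l)) as [alpha [Halpha Hbound]].
  - intros [x y] Hxy; apply in_prod_iff in Hxy as [Hx Hy].
    apply (wusdc_shrinks_dist X); auto; apply Hl; assumption.
  - exists alpha; split; [exact Halpha|].
    intros x y Hx Hy.
    apply (Hbound (x, y)), in_prod; apply Hl; assumption.
Qed.
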